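(* For integers $m\ge1$ let $f_m(x)=\frac{(m-x)^{m-1}}{e^{m-x}(m-1)!}$ for $x\le m$ and $f_m(x)=0$ for $x>m$, and for integers $m\ge2$ and real $z\ge0$ let $b(m,z)$ be the unique real number with $0\le b(m,z)\le z$ and $f_m(1-z)=f_m(1+z-b(m,z))$. There is an absolute constant $C>0$ such that the following holds. Suppose $n\ge100$ is an integer, $1\le w\le\frac n{10}$, $b=b(n+1,w)$ and $0\le\xi\le1$. (i) If $h$ is an integer with $w^{3/2}\le h\le n$, then $$|f_h(1+w-b-\xi)-f_h(1-w-\xi)|\le C\Big(\frac wh+\frac{w^3}{h^2}\Big)f_h(1-w).$$ (ii) If $2\sqrt n\le w\le \frac n{10}$ and $k$ is an integer with $1\le k\le n-3w$, then each of $f_{n+1-k}(1+w-b-\xi)$ and $f_{n+1-k}(1-w-\xi)$ is of the form $$f_{n+1}(1-w)\exp\Big\{\sum_{j=n-k}^{n}\Big(\frac1{2j}\Big(1-\frac{w^2}{j}\Big)+\theta_j\,C\frac{w^3}{j^3}\Big)+\theta\,C\frac wn\Big\}$$ for some real numbers $\theta_j$ ($n-k\le j\le n$) and $\theta$ with $|\theta_j|\le1$, $|\theta|\le1$.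
   Context: $f_m$ is the density of $X_1+\cdots+X_m$, where the $X_i$ are independent with density $e^{x-1}$ for $x\le 1$ and $0$ for $x>1$. *)

From Stdlib Require Import Reals Factorial.
Open Scope R_scope.

Definition fm (m : nat) (x : R) : R :=
  if Rle_dec x (INR m)
  then (INR m - x) ^ (m - 1) / (exp (INR m - x) * INR (fact (m - 1)))
  else 0.

Definition is_b (m : nat) (z b : R) : Prop :=
  0 <= b <= z /\ fm m (1 - z) = fm m (1 + z - b).

(* sum over j = a, ..., c (inclusive) *)
Definition sum_range (a c : nat) (g : nat -> R) : R := sum_f a c g.

(* Writing f_{M+1}(1 - y) = exp (log_fm M y) with
   log_fm M y = M ln (M + y) - (M + y) - ln M!, everything reduces to Taylor
   estimates for ln (1 + s).  The equation defining b reads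
   log_fm n w = log_fm n (-u) with u = w - b, and the second-order expansion of
   log_fm n around -u and w gives 0 <= w^2 - u^2 <= 8 w^3 / n.

   (i) For h > 4w, log_fm (h-1) at -u + xi and at w + xi differ from its value
   at w by O(w/h + w^3/h^2): a shift by xi costs O(w/h), and replacing w^2 by
   u^2 costs (w^2 - u^2) / 2h.  Then |e^a - e^c| <= 2 D e^D for |a|, |c| <= D.
   For h <= 4w we have w <= 25, and f_h <= f_h(1) <= e^w f_h(1 - w) suffices.

   (ii) One step of the recursion in the index is
   log_fm (j-1) y - log_fm j y = (1 - y^2/j) / 2j + O(|y|^3/j^3 + y^2/j^3 + 1/j^2),
   and y^2 = w^2 + O(w + w^3/n) for y = -u + xi or w + xi.  Telescoping over
   n-k < j <= n, absorbing the extra term j = n-k of the stated sum into the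
   error, and paying O(w/n) for the shift by xi at level n gives the expansion. *)

From Stdlib Require Import Reals Factorial Lra Lia Psatz.
From Coquelicot Require Import Coquelicot.
Open Scope R_scope.

Lemma exp_le_exp_of_le a c : a <= c -> exp a <= exp c.
Proof. intros [H | ->]; [left; now apply exp_increasing | lra]. Qed.

Lemma exp_pow a n : exp a ^ n = exp (INR n * a).
Proof.
  rewrite <- Rpower_pow by apply exp_pos. unfold Rpower. now rewrite ln_exp.
Qed.

Lemma Rabs_exp_sub_1_le d : Rabs (exp d - 1) <= Rabs d * exp (Rabs d).
Proof.
  pose proof (exp_ineq1_le d). pose proof (exp_ineq1_le (- d)). pose proof (exp_pos d).
  assert (exp d * exp (- d) = 1) by (rewrite <- exp_plus, Rplus_opp_r; apply exp_0).
  destruct (Rle_dec 0 d).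
  - rewrite !(Rabs_right d), Rabs_right by lra. nra.
  - rewrite !(Rabs_left d), Rabs_left1 by nra. nra.
Qed.

Lemma Rabs_exp_sub_exp_le a c D : Rabs a <= D -> Rabs c <= D ->
  Rabs (exp a - exp c) <= 2 * D * exp D.
Proof.
  intros Ha Hc.
  pose proof (Rabs_exp_sub_1_le a) as Ea. pose proof (Rabs_exp_sub_1_le c) as Ec.
  assert (exp (Rabs a) <= exp D) by (apply exp_le_exp_of_le; lra).
  assert (exp (Rabs c) <= exp D) by (apply exp_le_exp_of_le; lra).
  pose proof (Rabs_pos a). pose proof (Rabs_pos c). pose proof (exp_pos (Rabs a)).
  pose proof (exp_pos (Rabs c)).
  replace (exp a - exp c) with ((exp a - 1) - (exp c - 1)) by ring.
  unfold Rminus at 1. eapply Rle_trans; [apply Rabs_triang |]. rewrite Rabs_Ropp.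
  nra.
Qed.

Lemma Rabs_div_le a b c : 0 < b -> Rabs a <= c * b -> Rabs (a / b) <= c.
Proof.
  intros Hb H. unfold Rdiv. rewrite Rabs_mult, Rabs_inv, (Rabs_right b) by lra.
  apply Rmult_le_reg_r with b; [lra |]. rewrite Rmult_assoc, Rinv_l by lra. lra.
Qed.

Lemma Rabs_sum4_le a b c d : Rabs (a + b - c + d) <= Rabs a + Rabs b + Rabs c + Rabs d.
Proof. unfold Rabs; repeat destruct Rcase_abs; lra. Qed.

Definition ln_1p_rem (s : R) : R := ln (1 + s) - s + s ^ 2 / 2.

Lemma ln_1p_rem_mvt s : -1 < s ->
  exists c, -1 < c /\ Rabs c <= Rabs s /\ ln_1p_rem s = c ^ 2 / (1 + c) * s.
Proof.
  intros Hs.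
  assert (H0 : ln_1p_rem 0 = 0) by (unfold ln_1p_rem; rewrite Rplus_0_r, ln_1; lra).
  assert (D : forall c, -1 < c -> derivable_pt_lim ln_1p_rem c (c ^ 2 / (1 + c))).
  { intros c Hc. apply is_derive_Reals. unfold ln_1p_rem. auto_derive; [lra | field; lra]. }
  destruct (Rtotal_order s 0) as [Hneg | [-> | Hpos]].
  - destruct (MVT_cor2 ln_1p_rem (fun c => c ^ 2 / (1 + c)) s 0 Hneg) as [c [E Hc]].
    { intros c Hc. apply D. lra. }
    exists c. rewrite !Rabs_left by lra. split; [lra | split; lra].
  - exists 0. rewrite H0. split; [lra | split; [lra | field]].
  - destruct (MVT_cor2 ln_1p_rem (fun c => c ^ 2 / (1 + c)) 0 s Hpos) as [c [E Hc]].
    { intros c Hc. apply D. lra. }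
    exists c. rewrite !Rabs_right by lra. split; [lra | split; lra].
Qed.

Lemma ln_1p_le s : -1 < s -> ln (1 + s) <= s.
Proof.
  intros Hs. rewrite <- (ln_exp s) at 2. apply ln_le; [lra | apply exp_ineq1_le].
Qed.

Lemma ln_1p_ge s : 0 <= s -> s - s ^ 2 / 2 <= ln (1 + s).
Proof.
  intros Hs. destruct (ln_1p_rem_mvt s) as [c [Hc [_ E]]]; [lra |].
  unfold ln_1p_rem in E.
  assert (0 <= c ^ 2 / (1 + c)) by (apply Rdiv_le_0_compat; nra).
  nra.
Qed.

Lemma Rabs_ln_1p_rem_le s : Rabs s <= 1 / 2 -> Rabs (ln_1p_rem s) <= 2 * Rabs s ^ 3.
Proof.
  intros Hs. pose proof (Rabs_pos s).
  destruct (ln_1p_rem_mvt s) as [c [Hc [Hcs E]]].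
  { apply Rabs_le_between in Hs. lra. }
  rewrite E, Rabs_mult, Rabs_right.
  2:{ apply Rle_ge, Rdiv_le_0_compat; nra. }
  assert (Hc1 : 1 / 2 <= 1 + c).
  { assert (Hc2 : Rabs c <= 1 / 2) by lra. apply Rabs_le_between in Hc2. lra. }
  assert (c ^ 2 / (1 + c) <= 2 * Rabs s ^ 2).
  { apply Rmult_le_reg_r with (1 + c); [lra |].
    replace (c ^ 2 / (1 + c) * (1 + c)) with (Rabs c ^ 2) by (rewrite pow2_abs; field; lra).
    assert (Rabs c ^ 2 <= Rabs s ^ 2) by (apply pow_incr; split; [apply Rabs_pos | lra]).
    nra. }
  nra.
Qed.

Definition phi (M y : R) : R := M * ln (M + y) - (M + y).

Definition log_fm (M : nat) (y : R) : R := phi (INR M) y - ln (INR (fact M)).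

Lemma INR_fact_pos M : 0 < INR (fact M).
Proof. apply lt_0_INR, lt_O_fact. Qed.

Lemma fm_succ M x : x <= INR (S M) ->
  fm (S M) x = (INR (S M) - x) ^ M / (exp (INR (S M) - x) * INR (fact M)).
Proof.
  intros Hx. unfold fm. destruct (Rle_dec x (INR (S M))); [| lra].
  now replace (S M - 1)%nat with M by lia.
Qed.

Lemma fm_succ_exp M y : 0 < INR M + y -> fm (S M) (1 - y) = exp (log_fm M y).
Proof.
  intros Hy. rewrite fm_succ by (rewrite S_INR; lra).
  replace (INR (S M) - (1 - y)) with (INR M + y) by (rewrite S_INR; ring).
  unfold log_fm, phi. rewrite <- Rpower_pow by lra. unfold Rpower.
  unfold Rminus. rewrite !exp_plus, !exp_Ropp, !exp_plus, exp_ln by apply INR_fact_pos.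
  pose proof (INR_fact_pos M). pose proof (exp_pos y). pose proof (exp_pos (INR M)).
  field. lra.
Qed.

Lemma log_fm_sub M y1 y2 : log_fm M y1 - log_fm M y2 = phi (INR M) y1 - phi (INR M) y2.
Proof. unfold log_fm. ring. Qed.

Lemma fm_nonneg h x : 0 <= fm h x.
Proof.
  unfold fm. destruct (Rle_dec x (INR h)); [| lra].
  apply Rdiv_le_0_compat; [apply pow_le; lra |].
  apply Rmult_lt_0_compat; [apply exp_pos | apply INR_fact_pos].
Qed.

Lemma pow_mul_exp_neg_le t M : 0 <= t ->
  t ^ M * exp (- t) <= INR M ^ M * exp (- INR M).
Proof.
  intros Ht. destruct M as [| M'].
  { simpl. rewrite Ropp_0, exp_0, !Rmult_1_l, <- exp_0. apply exp_le_exp_of_le. lra. }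
  set (M := S M'). assert (HM : 0 < INR M) by (apply lt_0_INR; unfold M; lia).
  assert (Hx : (t / INR M) ^ M <= exp (t / INR M - 1) ^ M).
  { apply pow_incr. split; [apply Rdiv_le_0_compat; lra |].
    pose proof (exp_ineq1_le (t / INR M - 1)). lra. }
  rewrite exp_pow in Hx.
  replace (INR M * (t / INR M - 1)) with (t - INR M) in Hx by (field; lra).
  replace (t ^ M) with ((t / INR M) ^ M * INR M ^ M)
    by (rewrite <- Rpow_mult_distr; f_equal; field; lra).
  replace (INR M ^ M * exp (- INR M)) with (exp (t - INR M) * INR M ^ M * exp (- t))
    by (unfold Rminus; rewrite exp_plus; rewrite !exp_Ropp;
        field; split; apply Rgt_not_eq, exp_pos).
  apply Rmult_le_compat_r; [left; apply exp_pos |].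
  apply Rmult_le_compat_r; [apply pow_le; lra | exact Hx].
Qed.

Lemma fm_le_mode M x : fm (S M) x <= fm (S M) 1.
Proof.
  destruct (Rle_dec x (INR (S M))) as [Hx | Hx].
  - assert (H1 : 1 <= INR (S M)) by (rewrite S_INR; pose proof (pos_INR M); lra).
    rewrite !fm_succ by lra.
    replace (INR (S M) - 1) with (INR M) by (rewrite S_INR; ring).
    unfold Rdiv. rewrite !Rinv_mult, <- !exp_Ropp, <- !Rmult_assoc.
    apply Rmult_le_compat_r; [left; apply Rinv_0_lt_compat, INR_fact_pos |].
    apply pow_mul_exp_neg_le. lra.
  - unfold fm at 1. destruct (Rle_dec x (INR (S M))); [lra | apply fm_nonneg].
Qed.

Lemma fm_mode_le M w : 0 <= w -> fm (S M) 1 <= exp w * fm (S M) (1 - w).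
Proof.
  intros Hw. pose proof (pos_INR M).
  rewrite !fm_succ by (rewrite S_INR; lra).
  replace (INR (S M) - 1) with (INR M) by (rewrite S_INR; ring).
  replace (INR (S M) - (1 - w)) with (INR M + w) by (rewrite S_INR; ring).
  rewrite exp_plus.
  pose proof (INR_fact_pos M). pose proof (exp_pos w). pose proof (exp_pos (INR M)).
  replace (exp w * ((INR M + w) ^ M / (exp (INR M) * exp w * INR (fact M))))
    with ((INR M + w) ^ M / (exp (INR M) * INR (fact M))) by (field; lra).
  apply Rmult_le_compat_r.
  - left. apply Rinv_0_lt_compat, Rmult_lt_0_compat; lra.
  - apply pow_incr. lra.
Qed.

Lemma phi_shift_le M y xi w : 1 <= w -> 3 * w <= M -> Rabs y <= w -> 0 <= xi <= 1 ->
  Rabs (phi M (y + xi) - phi M y) <= 3 * w / M.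
Proof.
  intros Hw HM Hy Hxi. apply Rabs_le_between in Hy.
  set (r := / (M + y)).
  assert (Hr : 0 < r <= 3 / 2 * / M).
  { unfold r. split; [apply Rinv_0_lt_compat; lra |].
    replace (3 / 2 * / M) with (/ (2 / 3 * M)) by (field; lra).
    apply Rinv_le_contravar; lra. }
  assert (HMr : M * r - 1 = - y * r) by (unfold r; field; lra).
  set (s := xi * r).
  assert (E : phi M (y + xi) - phi M y = M * ln (1 + s) - xi).
  { unfold phi. replace (M + (y + xi)) with ((M + y) * (1 + s)) by (unfold s, r; field; lra).
    rewrite ln_mult by (unfold s; nra).
    replace ((M + y) * (1 + s)) with (M + y + xi) by (unfold s, r; field; lra). ring. }
  rewrite E.
  pose proof (ln_1p_le s ltac:(unfold s; nra)). pose proof (ln_1p_ge s ltac:(unfold s; nra)).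
  assert (Hmain : Rabs (M * s - xi) <= 3 / 2 * w * / M).
  { replace (M * s - xi) with (xi * (M * r - 1)) by (unfold s; ring).
    rewrite HMr.
    assert (- (w * r) <= y * r <= w * r) by (split; nra).
    assert (w * r <= 3 / 2 * w * / M) by nra.
    replace (xi * (- y * r)) with (- (xi * (y * r))) by ring.
    assert (0 <= xi * (w * r - y * r)) by (apply Rmult_le_pos; lra).
    assert (0 <= xi * (y * r + w * r)) by (apply Rmult_le_pos; lra).
    assert (0 <= (1 - xi) * (w * r)) by (apply Rmult_le_pos; nra).
    apply Rabs_le. split; lra. }
  assert (Hcorr : M * (s ^ 2 / 2) <= 9 / 8 * w * / M).
  { assert (s ^ 2 <= r ^ 2).
    { unfold s. rewrite Rpow_mult_distr.
      assert (xi ^ 2 <= 1) by nra. assert (0 <= r ^ 2) by nra. nra. }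
    assert (M * r ^ 2 <= 9 / 4 * / M).
    { replace (9 / 4 * / M) with (M * (3 / 2 * / M) ^ 2) by (field; lra).
      apply Rmult_le_compat_l; [lra | apply pow_incr; lra]. }
    assert (0 < / M) by (apply Rinv_0_lt_compat; lra). nra. }
  apply Rabs_le_between in Hmain. apply Rabs_le. unfold Rdiv.
  assert (0 < / M) by (apply Rinv_0_lt_compat; lra). nra.
Qed.

Lemma phi_quadratic M u w : 0 <= u <= w -> 0 < w -> 2 * w <= M ->
  Rabs (phi M (- u) - phi M w - (w ^ 2 - u ^ 2) / (2 * M)) <= 4 * w ^ 3 / M ^ 2.
Proof.
  intros Hu Hw HM.
  set (a := u / M). set (c := w / M).
  assert (Hc : 0 <= c <= 1 / 2).
  { unfold c. split; [apply Rdiv_le_0_compat; lra |].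
    apply Rmult_le_reg_r with M; [lra |]. field_simplify; lra. }
  assert (Hac : 0 <= a <= c).
  { unfold a, c. split; [apply Rdiv_le_0_compat; lra |].
    apply Rmult_le_compat_r; [left; apply Rinv_0_lt_compat |]; lra. }
  pose proof (Rabs_ln_1p_rem_le (- a) ltac:(rewrite Rabs_Ropp, Rabs_right; lra)) as Ta.
  pose proof (Rabs_ln_1p_rem_le c ltac:(rewrite Rabs_right; lra)) as Tc.
  rewrite Rabs_Ropp, (Rabs_right a) in Ta by lra. rewrite (Rabs_right c) in Tc by lra.
  assert (E : phi M (- u) - phi M w - (w ^ 2 - u ^ 2) / (2 * M)
              = M * (ln_1p_rem (- a) - ln_1p_rem c)).
  { unfold phi, ln_1p_rem.
    replace (M + - u) with (M * (1 + - a)) by (unfold a; field; lra).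
    replace (M + w) with (M * (1 + c)) by (unfold c; field; lra).
    rewrite !ln_mult by lra. unfold a, c. field. lra. }
  rewrite E, Rabs_mult, (Rabs_right M) by lra.
  assert (a ^ 3 <= c ^ 3) by (apply pow_incr; lra).
  assert (Rabs (ln_1p_rem (- a) - ln_1p_rem c) <= 4 * c ^ 3).
  { unfold Rminus at 1. eapply Rle_trans; [apply Rabs_triang |]. rewrite Rabs_Ropp. lra. }
  replace (4 * w ^ 3 / M ^ 2) with (M * (4 * c ^ 3)) by (unfold c; field; lra).
  apply Rmult_le_compat_l; lra.
Qed.

Lemma phi_eq_sq_gap N u w : phi N w = phi N (- u) -> 0 <= u <= w -> 0 < w -> 2 * w <= N ->
  0 <= w ^ 2 - u ^ 2 <= 8 * w ^ 3 / N.
Proof.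
  intros E Hu Hw HN. pose proof (phi_quadratic N u w Hu Hw HN) as G.
  rewrite E, Rminus_diag, Rminus_0_l, Rabs_Ropp in G.
  apply Rabs_le_between in G.
  split; [nra |].
  replace (8 * w ^ 3 / N) with (4 * w ^ 3 / N ^ 2 * (2 * N)) by (field; lra).
  replace (w ^ 2 - u ^ 2) with ((w ^ 2 - u ^ 2) / (2 * N) * (2 * N)) by (field; lra).
  apply Rmult_le_compat_r; lra.
Qed.

Lemma is_b_sq_gap n w b : 0 < w -> 2 * w <= INR n -> is_b (S n) w b ->
  0 <= w ^ 2 - (w - b) ^ 2 <= 8 * w ^ 3 / INR n.
Proof.
  intros Hw Hn [Hb E].
  replace (1 + w - b) with (1 - - (w - b)) in E by ring.
  rewrite !fm_succ_exp in E by lra.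
  apply exp_inv in E. unfold log_fm in E.
  apply phi_eq_sq_gap; lra.
Qed.

Lemma phi_neg_shift_gap m w u xi : 1 <= w -> 3 * w <= m -> 0 <= u <= w ->
  w ^ 2 - u ^ 2 <= 8 * w ^ 3 / m -> 0 <= xi <= 1 ->
  Rabs (phi m (- u + xi) - phi m w) <= 8 * (w / m + w ^ 3 / m ^ 2).
Proof.
  intros Hw Hm Hu Hgap Hxi.
  pose proof (phi_shift_le m (- u) xi w Hw Hm ltac:(rewrite Rabs_Ropp, Rabs_right; lra) Hxi) as Sh.
  pose proof (phi_quadratic m u w Hu ltac:(lra) ltac:(lra)) as Q.
  assert (G : 0 <= (w ^ 2 - u ^ 2) / (2 * m) <= 4 * w ^ 3 / m ^ 2).
  { split; [apply Rdiv_le_0_compat; nra |].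
    replace (4 * w ^ 3 / m ^ 2) with (8 * w ^ 3 / m / (2 * m)) by (field; lra).
    unfold Rdiv at 1. apply Rmult_le_compat_r; [left; apply Rinv_0_lt_compat |]; lra. }
  replace (phi m (- u + xi) - phi m w)
    with ((phi m (- u + xi) - phi m (- u))
          + (phi m (- u) - phi m w - (w ^ 2 - u ^ 2) / (2 * m))
          + (w ^ 2 - u ^ 2) / (2 * m)) by ring.
  eapply Rle_trans; [apply Rabs_triang |]. rewrite (Rabs_right (_ / _)) by lra.
  eapply Rle_trans; [apply Rplus_le_compat_r, Rabs_triang |].
  replace (8 * (w / m + w ^ 3 / m ^ 2)) with (8 * (w / m) + 8 * (w ^ 3 / m ^ 2)) by ring.
  assert (0 <= w / m) by (apply Rdiv_le_0_compat; lra).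
  replace (3 * w / m) with (3 * (w / m)) in Sh by (field; lra).
  replace (4 * w ^ 3 / m ^ 2) with (4 * (w ^ 3 / m ^ 2)) in Q, G by (field; lra).
  lra.
Qed.

Lemma pred_scale_le m w : 1 <= m -> 0 <= w ->
  w / m + w ^ 3 / m ^ 2 <= 4 * (w / (m + 1) + w ^ 3 / (m + 1) ^ 2).
Proof.
  intros Hm Hw. assert (0 <= w ^ 3) by (apply pow_le; lra).
  assert (w / m <= 2 * (w / (m + 1))).
  { apply Rmult_le_reg_r with (m * (m + 1)); [nra |].
    field_simplify; try lra. nra. }
  assert (w ^ 3 / m ^ 2 <= 4 * (w ^ 3 / (m + 1) ^ 2)).
  { apply Rmult_le_reg_r with (m ^ 2 * (m + 1) ^ 2); [apply Rmult_lt_0_compat; apply pow_lt; lra |].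
    field_simplify; try lra.
    assert (0 <= w ^ 3 * ((3 * m + 1) * (m - 1))) by (apply Rmult_le_pos; nra). nra. }
  assert (0 <= w / (m + 1)) by (apply Rdiv_le_0_compat; lra).
  lra.
Qed.

Lemma fm_diff_le_large M N w u xi : 1 <= w -> 0 <= u <= w -> 0 <= xi <= 1 ->
  w ^ 2 - u ^ 2 <= 8 * w ^ 3 / N -> INR (S M) <= N ->
  w ^ 3 <= INR (S M) ^ 2 -> 4 * w + 1 <= INR (S M) ->
  Rabs (fm (S M) (1 - (- u + xi)) - fm (S M) (1 - (w + xi)))
    <= 64 * exp 64 * (w / INR (S M) + w ^ 3 / INR (S M) ^ 2) * fm (S M) (1 - w).
Proof.
  intros Hw Hu Hxi Hgap HN Hw3 Hh. rewrite S_INR in *. set (m := INR M) in *.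
  set (E := w / (m + 1) + w ^ 3 / (m + 1) ^ 2).
  assert (HE : 0 <= E <= 2).
  { assert (w / (m + 1) <= 1) by (apply Rmult_le_reg_r with (m + 1); [| field_simplify]; lra).
    assert (w ^ 3 / (m + 1) ^ 2 <= 1).
    { apply Rmult_le_reg_r with ((m + 1) ^ 2); [apply pow_lt; lra |].
      field_simplify; lra. }
    assert (0 <= w / (m + 1)) by (apply Rdiv_le_0_compat; lra).
    assert (0 <= w ^ 3 / (m + 1) ^ 2) by (apply Rdiv_le_0_compat; [apply pow_le | apply pow_lt]; lra).
    unfold E. lra. }
  assert (Hscale := pred_scale_le m w ltac:(lra) ltac:(lra)). fold E in Hscale.
  assert (Hgap' : w ^ 2 - u ^ 2 <= 8 * w ^ 3 / m).
  { eapply Rle_trans; [exact Hgap |]. unfold Rdiv. apply Rmult_le_compat_l.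
    - assert (0 <= w ^ 3) by (apply pow_le; lra). lra.
    - apply Rinv_le_contravar; lra. }
  assert (Da : Rabs (phi m (- u + xi) - phi m w) <= 32 * E).
  { eapply Rle_trans; [apply phi_neg_shift_gap; lra |]. lra. }
  assert (Db : Rabs (phi m (w + xi) - phi m w) <= 32 * E).
  { eapply Rle_trans; [apply (phi_shift_le _ _ _ w); try rewrite Rabs_right; lra |].
    assert (0 <= w ^ 3 / m ^ 2) by (apply Rdiv_le_0_compat; [apply pow_le | apply pow_lt]; lra).
    replace (3 * w / m) with (3 * (w / m)) by (field; lra). lra. }
  rewrite !fm_succ_exp by (fold m; lra).
  replace (log_fm M (- u + xi)) with (log_fm M w + (phi m (- u + xi) - phi m w))
    by (unfold log_fm; fold m; ring).
  replace (log_fm M (w + xi)) with (log_fm M w + (phi m (w + xi) - phi m w))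
    by (unfold log_fm; fold m; ring).
  rewrite !exp_plus, <- Rmult_minus_distr_l, Rabs_mult, (Rabs_right (exp _)) by apply Rle_ge, Rlt_le, exp_pos.
  rewrite Rmult_comm. apply Rmult_le_compat_r; [left; apply exp_pos |].
  eapply Rle_trans; [apply (Rabs_exp_sub_exp_le _ _ (32 * E) Da Db) |].
  assert (exp (32 * E) <= exp 64) by (apply exp_le_exp_of_le; lra).
  pose proof (exp_pos (32 * E)). fold E. nra.
Qed.

Lemma fm_diff_le_small M w x1 x2 : 1 <= w ->
  w ^ 3 <= INR (S M) ^ 2 -> INR (S M) < 4 * w + 1 ->
  Rabs (fm (S M) x1 - fm (S M) x2)
    <= 64 * exp 64 * (w / INR (S M) + w ^ 3 / INR (S M) ^ 2) * fm (S M) (1 - w).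
Proof.
  intros Hw Hw3 Hh. set (h := INR (S M)) in *.
  assert (Hh1 : 1 <= h) by (unfold h; rewrite S_INR; pose proof (pos_INR M); lra).
  (* [w^3 <= h^2 < 25 w^2] forces [w < 25] *)
  assert (Hw25 : w <= 25).
  { assert (h ^ 2 <= (5 * w) ^ 2) by (apply pow_incr; lra). nra. }
  assert (Hratio : 1 / 5 <= w / h) by (apply Rmult_le_reg_r with h; [| field_simplify]; lra).
  assert (0 <= w ^ 3 / h ^ 2) by (apply Rdiv_le_0_compat; [apply pow_le | apply pow_lt]; lra).
  assert (Hmax : Rabs (fm (S M) x1 - fm (S M) x2) <= exp w * fm (S M) (1 - w)).
  { pose proof (fm_le_mode M x1). pose proof (fm_le_mode M x2).
    pose proof (fm_nonneg (S M) x1). pose proof (fm_nonneg (S M) x2).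
    pose proof (fm_mode_le M w ltac:(lra)). apply Rabs_le. lra. }
  eapply Rle_trans; [exact Hmax |]. apply Rmult_le_compat_r; [apply fm_nonneg |].
  assert (exp w <= exp 64) by (apply exp_le_exp_of_le; lra).
  pose proof (exp_pos 64). nra.
Qed.

Lemma fm_diff_le h N w u xi : 1 <= w -> 0 <= u <= w -> 0 <= xi <= 1 ->
  w ^ 2 - u ^ 2 <= 8 * w ^ 3 / N -> INR h <= N -> w ^ 3 <= INR h ^ 2 ->
  Rabs (fm h (1 - (- u + xi)) - fm h (1 - (w + xi)))
    <= 64 * exp 64 * (w / INR h + w ^ 3 / INR h ^ 2) * fm h (1 - w).
Proof.
  intros Hw Hu Hxi Hgap HN Hw3. destruct h as [| M].
  { assert (1 <= w ^ 3) by (apply pow_R1_Rle; lra). simpl in Hw3. lra. }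
  destruct (Rle_lt_dec (4 * w + 1) (INR (S M))).
  - now apply (fm_diff_le_large _ N).
  - now apply fm_diff_le_small.
Qed.

Lemma log_fm_pred_sub j y : (1 <= j)%nat ->
  log_fm (j - 1) y - log_fm j y = phi (INR j - 1) y - phi (INR j) y + ln (INR j).
Proof.
  intros Hj. destruct j as [| j']; [lia |].
  replace (S j' - 1)%nat with j' by lia.
  unfold log_fm. change (fact (S j')) with (S j' * fact j')%nat.
  rewrite mult_INR, ln_mult by (apply lt_0_INR; lia || apply lt_O_fact).
  rewrite S_INR. replace (INR j' + 1 - 1) with (INR j') by ring. ring.
Qed.

Lemma phi_pred_step_decomp J y : 0 < J -> 1 < J + y ->
  phi (J - 1) y - phi J y + ln J - (1 / (2 * J) - y ^ 2 / (2 * J ^ 2))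
  = y ^ 3 / (J ^ 2 * (J + y)) + (J - y ^ 2) / (2 * J * (J + y) ^ 2)
    - ln_1p_rem (y / J) + (J - 1) * ln_1p_rem (- / (J + y)).
Proof.
  intros HJ Hy.
  assert (0 < 1 + y / J) by (apply Rmult_lt_reg_r with J; [| field_simplify]; lra).
  assert (0 < 1 + - / (J + y)).
  { apply Rmult_lt_reg_r with (J + y); [lra |]. field_simplify; lra. }
  assert (L1 : ln (J + y) = ln J + ln (1 + y / J)).
  { rewrite <- ln_mult by lra. f_equal. field. lra. }
  assert (L2 : ln (J - 1 + y) = ln (J + y) + ln (1 + - / (J + y))).
  { rewrite <- ln_mult by lra. f_equal. field. lra. }
  unfold phi, ln_1p_rem. rewrite L2, L1. field. lra.
Qed.

Lemma phi_pred_step J y : 4 <= J -> Rabs y <= J / 2 ->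
  Rabs (phi (J - 1) y - phi J y + ln J - (1 / (2 * J) - y ^ 2 / (2 * J ^ 2)))
    <= 4 * Rabs y ^ 3 / J ^ 3 + 2 * y ^ 2 / J ^ 3 + 18 / J ^ 2.
Proof.
  intros HJ Hy. assert (HY : 0 <= Rabs y) by apply Rabs_pos.
  assert (Hyb := Hy). apply Rabs_le_between in Hyb.
  rewrite phi_pred_step_decomp by lra.
  set (p := J + y). assert (Hp : J / 2 <= p) by (unfold p; lra).
  assert (A1 : Rabs (y ^ 3 / (J ^ 2 * p)) <= 2 * Rabs y ^ 3 / J ^ 3).
  { apply Rabs_div_le; [apply Rmult_lt_0_compat; [apply pow_lt |]; lra |].
    rewrite <- RPow_abs.
    replace (2 * Rabs y ^ 3 / J ^ 3 * (J ^ 2 * p)) with (Rabs y ^ 3 * (2 * p / J)) by (field; lra).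
    assert (1 <= 2 * p / J) by (apply Rmult_le_reg_r with J; [| field_simplify]; lra).
    assert (0 <= Rabs y ^ 3) by (apply pow_le; lra). nra. }
  assert (A2 : Rabs ((J - y ^ 2) / (2 * J * p ^ 2)) <= 2 / J ^ 2 + 2 * y ^ 2 / J ^ 3).
  { apply Rabs_div_le; [apply Rmult_lt_0_compat; [| apply pow_lt]; lra |].
    assert (0 <= y ^ 2) by nra.
    apply Rle_trans with (J + y ^ 2); [apply Rabs_le; lra |].
    replace ((2 / J ^ 2 + 2 * y ^ 2 / J ^ 3) * (2 * J * p ^ 2))
      with ((J + y ^ 2) * (4 * p ^ 2 / J ^ 2)) by (field; lra).
    assert (1 <= 4 * p ^ 2 / J ^ 2)
      by (apply Rmult_le_reg_r with (J ^ 2); [apply pow_lt; lra | field_simplify; nra]).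
    nra. }
  assert (A3 : Rabs (ln_1p_rem (y / J)) <= 2 * Rabs y ^ 3 / J ^ 3).
  { eapply Rle_trans; [apply Rabs_ln_1p_rem_le, Rabs_div_le; lra |].
    rewrite Rabs_div, (Rabs_right J) by lra. right. field. lra. }
  assert (A4 : Rabs ((J - 1) * ln_1p_rem (- / p)) <= 16 / J ^ 2).
  { assert (Hq : Rabs (- / p) <= 2 / J).
    { rewrite Rabs_Ropp, Rabs_inv, Rabs_right by lra.
      replace (2 / J) with (/ (J / 2)) by (field; lra). apply Rinv_le_contravar; lra. }
    assert (Rabs (- / p) <= 1 / 2)
      by (eapply Rle_trans; [exact Hq | apply Rmult_le_reg_r with J; [| field_simplify]; lra]).
    rewrite Rabs_mult, (Rabs_right (J - 1)) by lra.
    assert (Rabs (- / p) ^ 3 <= (2 / J) ^ 3) by (apply pow_incr; split; [apply Rabs_pos | lra]).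
    apply Rle_trans with (J * (2 * (2 / J) ^ 3)).
    - apply Rmult_le_compat; [lra | apply Rabs_pos | lra |].
      eapply Rle_trans; [apply Rabs_ln_1p_rem_le; lra | lra].
    - right. field. lra. }
  eapply Rle_trans; [apply Rabs_sum4_le |]. lra.
Qed.

Lemma phi_pred_step_w J N w y : 1 <= w -> 2 * (w + 1) <= J -> J <= w ^ 2 / 4 -> J <= N ->
  Rabs y <= w + 1 -> Rabs (y ^ 2 - w ^ 2) <= 3 * w + 8 * w ^ 3 / N ->
  Rabs (phi (J - 1) y - phi J y + ln J - / (2 * J) * (1 - w ^ 2 / J)) <= 50 * (w ^ 3 / J ^ 3).
Proof.
  intros Hw HJ HJw HJN Hy Hyw.
  pose proof (phi_pred_step J y ltac:(lra) ltac:(lra)) as D.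
  replace (phi (J - 1) y - phi J y + ln J - / (2 * J) * (1 - w ^ 2 / J))
    with ((phi (J - 1) y - phi J y + ln J - (1 / (2 * J) - y ^ 2 / (2 * J ^ 2)))
          + (w ^ 2 - y ^ 2) / (2 * J ^ 2)) by (field; lra).
  eapply Rle_trans; [apply Rabs_triang |].
  assert (HJ3 : 0 < / J ^ 3) by (apply Rinv_0_lt_compat, pow_lt; lra).
  assert (Hw23 : w ^ 2 <= w ^ 3) by (simpl; nra).
  assert (Hy3 : Rabs y ^ 3 <= 8 * w ^ 3).
  { replace (8 * w ^ 3) with ((2 * w) ^ 3) by ring.
    apply pow_incr. pose proof (Rabs_pos y). lra. }
  assert (Hy2 : y ^ 2 <= 4 * w ^ 3).
  { rewrite <- pow2_abs. assert (Rabs y ^ 2 <= (2 * w) ^ 2) by (apply pow_incr; pose proof (Rabs_pos y); lra).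
    lra. }
  replace (4 * Rabs y ^ 3 / J ^ 3 + 2 * y ^ 2 / J ^ 3 + 18 / J ^ 2)
    with ((4 * Rabs y ^ 3 + 2 * y ^ 2 + 18 * J) * / J ^ 3) in D by (field; lra).
  assert (D' : Rabs (phi (J - 1) y - phi J y + ln J - (1 / (2 * J) - y ^ 2 / (2 * J ^ 2)))
                 <= 45 * w ^ 3 * / J ^ 3).
  { eapply Rle_trans; [exact D |]. apply Rmult_le_compat_r; lra. }
  assert (Hgap : Rabs ((w ^ 2 - y ^ 2) / (2 * J ^ 2)) <= 5 * w ^ 3 * / J ^ 3).
  { apply Rabs_div_le; [apply Rmult_lt_0_compat; [| apply pow_lt]; lra |].
    rewrite <- Rabs_Ropp, Ropp_minus_distr. eapply Rle_trans; [exact Hyw |].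
    replace (5 * w ^ 3 * / J ^ 3 * (2 * J ^ 2)) with (10 * w ^ 3 / J) by (field; lra).
    assert (8 * w ^ 3 / N <= 8 * w ^ 3 / J).
    { unfold Rdiv. apply Rmult_le_compat_l; [nra | apply Rinv_le_contravar; lra]. }
    assert (3 * w <= 2 * w ^ 3 / J).
    { apply Rmult_le_reg_r with J; [lra |]. field_simplify; nra. }
    replace (10 * w ^ 3 / J) with (2 * w ^ 3 / J + 8 * w ^ 3 / J) by (field; lra).
    lra. }
  replace (50 * (w ^ 3 / J ^ 3)) with (45 * w ^ 3 * / J ^ 3 + 5 * w ^ 3 * / J ^ 3) by (field; lra).
  lra.
Qed.

Lemma sum_f_single a u : sum_f a a u = u a.
Proof. unfold sum_f. now rewrite Nat.sub_diag. Qed.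

Lemma sum_f_plus_scal a c f g t :
  sum_f a c (fun j => f j + t * g j) = sum_f a c f + t * sum_f a c g.
Proof.
  unfold sum_f. rewrite plus_sum, scal_sum. f_equal. apply sum_eq. intros. ring.
Qed.

Lemma sum_f_scal a c t g : sum_f a c (fun j => t * g j) = t * sum_f a c g.
Proof. unfold sum_f. rewrite scal_sum. apply sum_eq. intros. ring. Qed.

Lemma sum_f_nonneg a c u : (forall j, 0 <= u j) -> 0 <= sum_f a c u.
Proof. intros Hu. apply cond_pos_sum. intros. apply Hu. Qed.

Lemma sum_f_R0_le_of_le An m n : (forall i, 0 <= An i) -> (m <= n)%nat ->
  sum_f_R0 An m <= sum_f_R0 An n.
Proof.
  intros Hpos Hmn. induction Hmn as [| n Hmn IH]; [lra |].
  rewrite tech5. specialize (Hpos (S n)). lra.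
Qed.

Lemma sum_f_ge_count a c n u L : (a <= c <= n)%nat -> (forall j, 0 <= u j) ->
  (forall j, (a <= j <= c)%nat -> L <= u j) -> INR (S (c - a)) * L <= sum_f a n u.
Proof.
  intros Hacn Hpos HL. unfold sum_f.
  apply Rle_trans with (sum_f_R0 (fun x => u (x + a)%nat) (c - a)).
  - rewrite Rmult_comm, <- sum_cte. apply sum_Rle. intros i Hi. apply HL. lia.
  - apply sum_f_R0_le_of_le; [intros; apply Hpos | lia].
Qed.

Lemma sum_f_telescope_le (F g e : nat -> R) a c : (a < c)%nat ->
  (forall j, (a < j <= c)%nat -> Rabs (F (j - 1)%nat - F j - g j) <= e j) ->
  Rabs (F a - F c - sum_f (S a) c g) <= sum_f (S a) c e.
Proof.
  intros Hac. induction Hac as [| c Hac IH]; intros Hstep.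
  - rewrite !sum_f_single. replace a with (S a - 1)%nat at 1 by lia. apply Hstep. lia.
  - rewrite !sum_f_n_Sm by lia.
    specialize (IH ltac:(intros j Hj; apply Hstep; lia)).
    specialize (Hstep (S c) ltac:(lia)). replace (S c - 1)%nat with c in Hstep by lia.
    replace (F a - F (S c) - (sum_f (S a) c g + g (S c)))
      with ((F a - F c - sum_f (S a) c g) + (F c - F (S c) - g (S c))) by ring.
    eapply Rle_trans; [apply Rabs_triang | lra].
Qed.

Definition main_term (w : R) (j : nat) : R := / (2 * INR j) * (1 - w ^ 2 / INR j).

Definition cubic_term (w : R) (j : nat) : R := w ^ 3 / INR j ^ 3.

Lemma cubic_term_nonneg w j : 0 <= w -> 0 <= cubic_term w j.
Proof.
  intros Hw. unfold cubic_term. destruct j as [| j].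
  - replace (INR 0 ^ 3) with 0 by (simpl; ring). unfold Rdiv. rewrite Rinv_0. lra.
  - apply Rdiv_le_0_compat; apply pow_le || apply pow_lt; try lra. apply lt_0_INR. lia.
Qed.

Lemma Rabs_main_term_le w a : 0 < INR a ->
  Rabs (main_term w a) <= (INR a + w ^ 2) / (2 * INR a ^ 2).
Proof.
  intros Ha. unfold main_term. rewrite Rabs_mult, Rabs_right.
  2:{ apply Rle_ge, Rlt_le, Rinv_0_lt_compat. lra. }
  assert (0 <= w ^ 2 / INR a) by (apply Rdiv_le_0_compat; [nra | lra]).
  apply Rle_trans with (/ (2 * INR a) * (1 + w ^ 2 / INR a)).
  - apply Rmult_le_compat_l; [left; apply Rinv_0_lt_compat; lra | apply Rabs_le; lra].
  - right. field. lra.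
Qed.

Lemma main_term_le_of_large_index w a n : 0 < INR a -> INR n <= 2 * INR a ->
  1 <= w -> w <= INR n / 10 -> Rabs (main_term w a) <= 2 * (w / INR n).
Proof.
  intros Ha Hn Hw Hwn. eapply Rle_trans; [apply Rabs_main_term_le; lra |].
  apply Rmult_le_reg_r with (2 * INR a ^ 2 * INR n); [apply Rmult_lt_0_compat; nra |].
  field_simplify; try lra.
  assert (INR n * INR a <= 2 * w * INR a ^ 2) by nra.
  assert (INR n * w <= 2 * INR a ^ 2) by nra.
  nra.
Qed.

Lemma main_term_le_sum_cubic w a n : 0 < INR a -> (2 * a <= n)%nat -> 1 <= w ->
  INR a <= w ^ 2 -> Rabs (main_term w a) <= 8 * sum_f a n (cubic_term w).
Proof.
  intros Ha Han Hw Haw. set (A := INR a) in *.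
  set (L := w ^ 3 / (2 * A) ^ 3).
  assert (Hsum : INR (S (2 * a - a)) * L <= sum_f a n (cubic_term w)).
  { apply sum_f_ge_count; [lia | intros; apply cubic_term_nonneg; lra |].
    intros j Hj. unfold cubic_term, L, Rdiv. apply Rmult_le_compat_l; [apply pow_le; lra |].
    assert (A <= INR j) by (apply le_INR; lia).
    assert (INR j <= 2 * A) by (unfold A; change 2 with (INR 2); rewrite <- mult_INR; apply le_INR; lia).
    apply Rinv_le_contravar; [apply pow_lt; lra | apply pow_incr; lra]. }
  replace (2 * a - a)%nat with a in Hsum by lia. rewrite S_INR in Hsum. fold A in Hsum.
  eapply Rle_trans; [apply Rabs_main_term_le; exact Ha |]. fold A.
  assert (0 <= L) by (unfold L; apply Rdiv_le_0_compat; [apply pow_le | apply pow_lt]; lra).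
  assert (w ^ 2 <= w ^ 3) by (simpl; nra).
  replace ((A + w ^ 2) / (2 * A ^ 2)) with (8 * A * L * ((A + w ^ 2) / (2 * w ^ 3)))
    by (unfold L; field; lra).
  assert ((A + w ^ 2) / (2 * w ^ 3) <= 1)
    by (apply Rmult_le_reg_r with (2 * w ^ 3); [nra | field_simplify; lra]).
  assert (0 <= (A + w ^ 2) / (2 * w ^ 3)) by (apply Rdiv_le_0_compat; nra).
  assert (0 <= A * L) by (apply Rmult_le_pos; lra).
  assert (A * L * ((A + w ^ 2) / (2 * w ^ 3)) <= A * L) by nra.
  nra.
Qed.

Lemma log_fm_expansion n k w xi y0 :
  1 <= w -> w <= INR n / 10 -> 4 * INR n <= w ^ 2 ->
  (1 <= k)%nat -> INR k <= INR n - 3 * w -> Rabs y0 <= w -> 0 <= xi <= 1 ->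
  Rabs ((y0 + xi) ^ 2 - w ^ 2) <= 3 * w + 8 * w ^ 3 / INR n ->
  Rabs (log_fm (n - k) (y0 + xi) - log_fm n y0 - sum_f (n - k) n (main_term w))
    <= 61 * (sum_f (n - k) n (cubic_term w) + w / INR n).
Proof.
  intros Hw Hwn Hw2 Hk Hkn Hy0 Hxi Hyw.
  assert (Hkn' : (k <= n)%nat) by (apply INR_le; lra).
  set (a := (n - k)%nat). set (y := y0 + xi) in *.
  assert (HA : 3 * w <= INR a) by (unfold a; rewrite minus_INR by lia; lra).
  assert (Hy : Rabs y <= w + 1).
  { apply Rabs_le_between in Hy0. apply Rabs_le. unfold y. lra. }
  assert (Htele : Rabs (log_fm a y - log_fm n y - sum_f (S a) n (main_term w))
                    <= sum_f (S a) n (fun j => 50 * cubic_term w j)).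
  { apply (sum_f_telescope_le (fun j => log_fm j y)); [unfold a; lia |].
    intros j Hj. rewrite log_fm_pred_sub by lia.
    assert (INR a + 1 <= INR j) by (rewrite <- S_INR; apply le_INR; lia).
    assert (INR j <= INR n) by (apply le_INR; lia).
    apply (phi_pred_step_w _ (INR n)); lra. }
  rewrite sum_f_scal in Htele.
  assert (Hshift : Rabs (log_fm n y - log_fm n y0) <= 3 * (w / INR n)).
  { rewrite log_fm_sub. replace (3 * (w / INR n)) with (3 * w / INR n) by (field; lra).
    apply phi_shift_le; lra. }
  assert (0 <= w / INR n) by (apply Rdiv_le_0_compat; lra).
  assert (Hfirst : Rabs (main_term w a) <= 8 * sum_f a n (cubic_term w) + 2 * (w / INR n)).
  { assert (0 <= sum_f a n (cubic_term w)) by (apply sum_f_nonneg; intros; apply cubic_term_nonneg; lra).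
    destruct (Compare_dec.le_lt_dec n (2 * a)) as [Hna | Hna].
    - assert (INR n <= 2 * INR a) by (change 2 with (INR 2); rewrite <- mult_INR; apply le_INR; lia).
      pose proof (main_term_le_of_large_index w a n ltac:(lra) ltac:(lra) Hw Hwn). lra.
    - assert (INR a <= INR n) by (apply le_INR; unfold a; lia).
      pose proof (main_term_le_sum_cubic w a n ltac:(lra) ltac:(lia) Hw ltac:(lra)). lra. }
  assert (Hsplit : forall u, sum_f a n u = u a + sum_f (S a) n u).
  { intros u. rewrite sum_f_Sn_m by (unfold a; lia). ring. }
  rewrite (Hsplit (main_term w)), (Hsplit (cubic_term w)).
  rewrite (Hsplit (cubic_term w)) in Hfirst.
  pose proof (cubic_term_nonneg w a ltac:(lra)).
  assert (0 <= sum_f (S a) n (cubic_term w)) by (apply sum_f_nonneg; intros; apply cubic_term_nonneg; lra).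
  replace (log_fm a y - log_fm n y0 - (main_term w a + sum_f (S a) n (main_term w)))
    with ((log_fm a y - log_fm n y - sum_f (S a) n (main_term w))
          + (log_fm n y - log_fm n y0) - main_term w a) by ring.
  eapply Rle_trans; [apply Rabs_triang |]. rewrite Rabs_Ropp.
  eapply Rle_trans; [apply Rplus_le_compat_r, Rabs_triang |].
  lra.
Qed.

Lemma exp_theta_form a c (g h : nat -> R) F0 F1 e C :
  (forall j, 0 <= h j) -> 0 < e -> 0 < C ->
  Rabs (F1 - F0 - sum_f a c g) <= C * (sum_f a c h + e) ->
  exists (th : nat -> R) (t : R),
    (forall j : nat, (a <= j <= c)%nat -> Rabs (th j) <= 1) /\ Rabs t <= 1 /\
    exp F1 = exp F0 * exp (sum_range a c (fun j => g j + th j * C * h j) + t * C * e).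
Proof.
  intros Hh He HC Hbound.
  set (Q := sum_f a c h + e).
  assert (HQ : 0 < Q) by (unfold Q; pose proof (sum_f_nonneg a c h Hh); lra).
  set (th := (F1 - F0 - sum_f a c g) / (C * Q)).
  assert (Hth : Rabs th <= 1).
  { apply Rabs_div_le; [now apply Rmult_lt_0_compat | now rewrite Rmult_1_l]. }
  exists (fun _ => th), th. split; [easy | split; [exact Hth |]].
  rewrite <- exp_plus. f_equal. unfold sum_range.
  rewrite (sum_f_plus_scal a c g h (th * C)).
  unfold th, Q. field. split; apply Rgt_not_eq; [exact HQ | exact HC].
Qed.

Lemma fm_expansion n k w xi y0 C :
  1 <= w -> w <= INR n / 10 -> 4 * INR n <= w ^ 2 ->
  (1 <= k)%nat -> INR k <= INR n - 3 * w ->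
  Rabs y0 <= w -> 0 <= w ^ 2 - y0 ^ 2 <= 8 * w ^ 3 / INR n -> 0 <= xi <= 1 -> 61 <= C ->
  exists (th : nat -> R) (t : R),
    (forall j : nat, (n - k <= j <= n)%nat -> Rabs (th j) <= 1) /\ Rabs t <= 1 /\
    fm (S (n - k)) (1 - (y0 + xi)) =
      fm (S n) (1 - y0) *
      exp (sum_range (n - k) n
             (fun j => / (2 * INR j) * (1 - w ^ 2 / INR j) + th j * C * (w ^ 3 / INR j ^ 3))
           + t * C * (w / INR n)).
Proof.
  intros Hw Hwn Hw2 Hk Hkn Hy0 Hgap Hxi HC.
  assert (Hkn' : (k <= n)%nat) by (apply INR_le; lra).
  assert (Hy0b := Hy0). apply Rabs_le_between in Hy0b.
  rewrite !fm_succ_exp by (try rewrite minus_INR by lia; lra).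
  apply (exp_theta_form _ _ (main_term w) (cubic_term w)).
  - intros j. apply cubic_term_nonneg. lra.
  - apply Rdiv_lt_0_compat; lra.
  - lra.
  - assert (Hsum : 0 <= sum_f (n - k) n (cubic_term w) + w / INR n).
    { pose proof (sum_f_nonneg (n - k) n (cubic_term w) ltac:(intros; apply cubic_term_nonneg; lra)).
      assert (0 <= w / INR n) by (apply Rdiv_le_0_compat; lra). lra. }
    eapply Rle_trans; [| apply Rmult_le_compat_r; [exact Hsum | exact HC]].
    apply log_fm_expansion; try assumption.
    apply Rabs_le. nra.
Qed.

Lemma pow3_le_sq_of_Rpower w x : 0 < w -> Rpower w (3 / 2) <= x -> w ^ 3 <= x ^ 2.
Proof.
  intros Hw Hx.
  assert (E : Rpower w (3 / 2) ^ 2 = w ^ 3).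
  { rewrite <- Rpower_pow by (unfold Rpower; apply exp_pos).
    rewrite Rpower_mult. replace (3 / 2 * INR 2) with (INR 3) by (simpl; field).
    now apply Rpower_pow. }
  rewrite <- E. apply pow_incr. split; [left; unfold Rpower; apply exp_pos | exact Hx].
Qed.

Lemma four_le_sq_of_sqrt x w : 0 <= x -> 2 * sqrt x <= w -> 4 * x <= w ^ 2.
Proof.
  intros Hx Hw. pose proof (sqrt_pos x).
  assert (Hsq : (2 * sqrt x) ^ 2 <= w ^ 2) by (apply pow_incr; lra).
  replace ((2 * sqrt x) ^ 2) with (4 * (sqrt x * sqrt x)) in Hsq by ring.
  rewrite sqrt_sqrt in Hsq by lra. lra.
Qed.

Theorem lemma7 :
  exists C : R, 0 < C /\
  forall (n : nat) (w b xi : R),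
    (100 <= n)%nat ->
    1 <= w -> w <= INR n / 10 ->
    is_b (n + 1) w b ->
    0 <= xi <= 1 ->
    (* (i) *)
    (forall h : nat,
        Rpower w (3 / 2) <= INR h -> (h <= n)%nat ->
        Rabs (fm h (1 + w - b - xi) - fm h (1 - w - xi))
          <= C * (w / INR h + w ^ 3 / INR h ^ 2) * fm h (1 - w))
    /\
    (* (ii) *)
    (2 * sqrt (INR n) <= w ->
     forall k : nat,
       (1 <= k)%nat -> INR k <= INR n - 3 * w ->
       (exists (th : nat -> R) (t : R),
          (forall j : nat, (n - k <= j <= n)%nat -> Rabs (th j) <= 1) /\
          Rabs t <= 1 /\
          fm (n + 1 - k) (1 + w - b - xi) =
            fm (n + 1) (1 - w) *
            exp (sum_range (n - k) n
                   (fun j => / (2 * INR j) * (1 - w ^ 2 / INR j)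
                             + th j * C * (w ^ 3 / INR j ^ 3))
                 + t * C * (w / INR n)))
       /\
       (exists (th : nat -> R) (t : R),
          (forall j : nat, (n - k <= j <= n)%nat -> Rabs (th j) <= 1) /\
          Rabs t <= 1 /\
          fm (n + 1 - k) (1 - w - xi) =
            fm (n + 1) (1 - w) *
            exp (sum_range (n - k) n
                   (fun j => / (2 * INR j) * (1 - w ^ 2 / INR j)
                             + th j * C * (w ^ 3 / INR j ^ 3))
                 + t * C * (w / INR n)))).
Proof.
  exists (64 * exp 64). split; [pose proof (exp_pos 64); lra |].
  intros n w b xi _ Hw Hwn Hb Hxi.
  replace (n + 1)%nat with (S n) in * by lia.
  pose proof (is_b_sq_gap n w b ltac:(lra) ltac:(lra) Hb) as Hgap.
  destruct Hb as [Hb Hfm].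
  replace (1 + w - b - xi) with (1 - (- (w - b) + xi)) by ring.
  replace (1 - w - xi) with (1 - (w + xi)) by ring.
  split.
  - intros h Hh Hhn.
    apply (fm_diff_le _ (INR n)); try lra.
    + now apply le_INR.
    + apply pow3_le_sq_of_Rpower; lra.
  - intros Hsq k Hk Hkn.
    pose proof (four_le_sq_of_sqrt (INR n) w (pos_INR n) Hsq).
    assert (HC : 61 <= 64 * exp 64) by (pose proof (exp_ineq1_le 64); lra).
    assert (Hkn' : (k <= n)%nat) by (apply INR_le; lra).
    replace (S n - k)%nat with (S (n - k)) by lia.
    split.
    + rewrite Hfm. replace (1 + w - b) with (1 - - (w - b)) by ring.
      apply fm_expansion; try lra; try assumption.
      rewrite Rabs_Ropp, Rabs_right; lra.
    + apply fm_expansion; try lra; try assumption.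
      rewrite Rabs_right; lra.
Qed.
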